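(* Let $K_1$ and $K_2$ be non-trivial $\mathcal R$-dioids. Then the tensor product $K_1\otimes_{\mathcal R}K_2$ is non-trivial, and the canonical $\mathcal R$-morphisms $\top_1:K_1\to K_1\otimes_{\mathcal R}K_2$ and $\top_2:K_2\to K_1\otimes_{\mathcal R}K_2$ are injective.
   Context: An $\mathcal R$-dioid is a dioid in which every regular subset of its multiplicative monoid has a supremum $\sum A$ with $\sum(AB)=(\sum A)(\sum B)$ (equivalently a $*$-continuous Kleene algebra); it is non-trivial if $0\ne 1$. An $\mathcal R$-morphism is a dioid morphism preserving suprema of regular sets. The tensor product $K_1\otimes_{\mathcal R}K_2$ is an $\mathcal R$-dioid with $\mathcal R$-morphisms $\top_1,\top_2$ from $K_1,K_2$ whose images commute elementwise, universal: every pair of elementwise commuting $\mathcal R$-morphisms $f:K_1\to K$, $g:K_2\to K$ into an $\mathcal R$-dioid $K$ factors uniquely as $f=h\circ\top_1$, $g=h\circ\top_2$ with an $\mathcal R$-morphism $h$. Concretely it is $\mathcal R(K_1\times K_2)/{\equiv}$, the regular subsets of the product of the multiplicative monoids modulo the least $\mathcal R$-congruence identifying $A\times B$ with $\{(\sum A,\sum B)\}$ for regular $A\subseteq K_1$, $B\subseteq K_2$, with $\top_1(a)=[\{(a,1)\}]$, $\top_2(b)=[\{(1,b)\}]$. (An $\mathcal R$-congruence is a semiring congruence such that regular sets with equal downward closures modulo it have congruent suprema.) *)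

From HB Require Import structures.
From mathcomp Require Import all_boot all_algebra.
Set Implicit Arguments. Unset Strict Implicit. Unset Printing Implicit Defensive.
Import GRing.Theory.
Local Open Scope ring_scope.

Definition pset (T : Type) := T -> Prop.

Section Monoid.
Variables (M : Type) (mul : M -> M -> M) (one : M).

Definition set_empty : pset M := fun _ => False.
Definition set_single (x : M) : pset M := fun y => y = x.
Definition set_union (A B : pset M) : pset M := fun x => A x \/ B x.
Definition set_prod (A B : pset M) : pset M :=
  fun x => exists a b, A a /\ B b /\ x = mul a b.
Fixpoint set_pow (A : pset M) (n : nat) : pset M :=
  match n with
  | O => set_single one
  | S n => set_prod A (set_pow A n)
  end.
Definition set_star (A : pset M) : pset M := fun x => exists n, set_pow A n x.

(* Regular subsets of the submonoid of M carried by P (P must contain one and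
   be closed under mul): the least family containing the finite subsets of P,
   closed under union, product and star (and extensional equality). *)
Inductive regular_in (P : pset M) : pset M -> Prop :=
| reg_empty : regular_in P set_empty
| reg_single x : P x -> regular_in P (set_single x)
| reg_union A B : regular_in P A -> regular_in P B -> regular_in P (set_union A B)
| reg_prod A B : regular_in P A -> regular_in P B -> regular_in P (set_prod A B)
| reg_star A : regular_in P A -> regular_in P (set_star A)
| reg_ext A B : (forall x, A x <-> B x) -> regular_in P A -> regular_in P B.

Definition regular : pset M -> Prop := regular_in (fun _ => True).
End Monoid.

Definition dioid (K : pzSemiRingType) : Prop := forall x : K, x + x = x.

Definition dle (K : pzSemiRingType) (x y : K) : Prop := x + y = y.

Definition is_sup (K : pzSemiRingType) (A : pset K) (s : K) : Prop :=
  (forall a, A a -> dle a s) /\ (forall u, (forall a, A a -> dle a u) -> dle s u).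

Definition regK (K : pzSemiRingType) : pset K -> Prop :=
  regular (fun x y : K => x * y) 1.

Definition R_dioid (K : pzSemiRingType) : Prop :=
  dioid K /\
  (forall A : pset K, regK A -> exists s, is_sup A s) /\
  (forall (A B : pset K) (a b : K), regK A -> regK B ->
      is_sup A a -> is_sup B b -> is_sup (set_prod (fun x y : K => x * y) A B) (a * b)).

Definition nontrivial (K : pzSemiRingType) : Prop := (0 : K) <> 1.

Section Tensor.
Variables K1 K2 : pzSemiRingType.

Definition pmul (x y : K1 * K2) : K1 * K2 := (x.1 * y.1, x.2 * y.2).
Definition pone : K1 * K2 := (1, 1).

Definition regP : pset (K1 * K2) -> Prop := regular pmul pone.

Definition Tzero : pset (K1 * K2) := @set_empty _.
Definition Tone : pset (K1 * K2) := set_single pone.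
Definition Tadd : pset (K1 * K2) -> pset (K1 * K2) -> pset (K1 * K2) := @set_union _.
Definition Tmul : pset (K1 * K2) -> pset (K1 * K2) -> pset (K1 * K2) := set_prod pmul.

Definition regT : pset (pset (K1 * K2)) -> Prop := regular_in Tmul Tone regP.

(* supremum in R(K1 x K2) of a family of its elements: the union *)
Definition bigU (F : pset (pset (K1 * K2))) : pset (K1 * K2) :=
  fun x => exists A, F A /\ A x.

Definition rect (A : pset K1) (B : pset K2) : pset (K1 * K2) :=
  fun x => A x.1 /\ B x.2.

(* An R-congruence on R(K1 x K2) (a relation on its elements, i.e. on the
   regular subsets; behaviour on non-regular sets is irrelevant) which
   moreover identifies A x B with {(sup A, sup B)}. *)
Definition Rcong (th : pset (K1 * K2) -> pset (K1 * K2) -> Prop) : Prop :=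
  (forall A, regP A -> th A A) /\
  (forall A B, regP A -> regP B -> th A B -> th B A) /\
  (forall A B C, regP A -> regP B -> regP C -> th A B -> th B C -> th A C) /\
  (forall A A' B B', regP A -> regP A' -> regP B -> regP B' ->
      th A A' -> th B B' -> th (Tadd A B) (Tadd A' B') /\ th (Tmul A B) (Tmul A' B')) /\
  (* regular sets with equal downward closures modulo th have congruent sups;
     the order modulo th is  X <= Y  iff  th (X + Y) Y *)
  (forall F G : pset (pset (K1 * K2)), regT F -> regT G ->
      (forall A, F A -> exists B, G B /\ th (Tadd A B) B) ->
      (forall B, G B -> exists A, F A /\ th (Tadd B A) A) ->
      th (bigU F) (bigU G)).

Definition Rcong_gen (th : pset (K1 * K2) -> pset (K1 * K2) -> Prop) : Prop :=
  Rcong th /\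
  (forall (A : pset K1) (B : pset K2) (a : K1) (b : K2),
      regK A -> regK B -> is_sup A a -> is_sup B b ->
      th (rect A B) (set_single (a, b))).

Definition tequiv (X Y : pset (K1 * K2)) : Prop :=
  forall th, Rcong_gen th -> th X Y.

(* canonical morphisms top1, top2 (as representatives) *)
Definition top1 (a : K1) : pset (K1 * K2) := set_single (a, 1).
Definition top2 (b : K2) : pset (K1 * K2) := set_single (1, b).

Definition tensor_nontrivial : Prop := ~ tequiv Tzero Tone.
End Tensor.

From Stdlib Require Import Classical.
From mathcomp Require Import all_boot all_algebra.
Set Implicit Arguments. Unset Strict Implicit. Unset Printing Implicit Defensive.
Import GRing.Theory.
Local Open Scope ring_scope.

(* Two subsets of K1 x K2 are identified when they have the same saturation,
   the least superset closed downwards in the product order and containing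
   (sup A, sup B) whenever it contains the rectangle A x B of regular sets.
   This is an R-congruence making every A x B congruent to (sup A, sup B), so
   it contains the least one.  For every a, b the "cross"
   { p | p.1 <= a or p.2 <= b } is saturated: a rectangle inside it either
   has its first side below a or its second side below b.  The set {(1, 1)}
   lies in no cross through 0, whereas the empty set lies in all of them; and
   {(a', 1)} lies in the saturation of {(a, 1)} only if a' <= a. *)

Section NaturalOrder.
Variable K : pzSemiRingType.
Implicit Types x y z : K.

Lemma dle_refl x : dioid K -> dle x x.
Proof. exact. Qed.

Lemma dle_trans x y z : dle x y -> dle y z -> dle x z.
Proof. by rewrite /dle => xy <-; rewrite addrA xy. Qed.

Lemma dle_antisym x y : dle x y -> dle y x -> x = y.
Proof. by rewrite /dle => xy <-; rewrite addrC xy. Qed.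

Lemma dlex0 x : dle x 0 -> x = 0.
Proof. by rewrite /dle addr0. Qed.

Lemma dle_mul2l z x y : dle x y -> dle (z * x) (z * y).
Proof. by rewrite /dle => xy; rewrite -mulrDr xy. Qed.

Lemma dle_mul2r z x y : dle x y -> dle (x * z) (y * z).
Proof. by rewrite /dle => xy; rewrite -mulrDl xy. Qed.

Lemma regK_mull c (A : pset K) : regK A -> regK (set_prod *%R (set_single c) A).
Proof. by move=> rA; apply: reg_prod rA; apply: reg_single. Qed.

Lemma regK_mulr c (A : pset K) : regK A -> regK (set_prod *%R A (set_single c)).
Proof. by move=> rA; apply: reg_prod rA _; apply: reg_single. Qed.

Lemma is_sup_single (c : K) : dioid K -> is_sup (set_single c) c.
Proof. by move=> HK; split=> [_ -> | u]; [apply: dle_refl | apply]. Qed.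

Lemma is_sup_mull (c : K) (A : pset K) a : R_dioid K -> regK A -> is_sup A a ->
  is_sup (set_prod *%R (set_single c) A) (c * a).
Proof.
case=> HK [_ HM] rA sA.
by apply: HM => //; [apply: reg_single | apply: is_sup_single].
Qed.

Lemma is_sup_mulr (c : K) (A : pset K) a : R_dioid K -> regK A -> is_sup A a ->
  is_sup (set_prod *%R A (set_single c)) (a * c).
Proof.
case=> HK [_ HM] rA sA.
by apply: HM => //; [apply: reg_single | apply: is_sup_single].
Qed.

End NaturalOrder.

Section Saturation.
Variables K1 K2 : pzSemiRingType.
Implicit Types (X Y : pset (K1 * K2)) (p q : K1 * K2).

Inductive sat X : pset (K1 * K2) :=
| sat_in p : X p -> sat X p
| sat_down p q : dle p.1 q.1 -> dle p.2 q.2 -> sat X q -> sat X p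
| sat_rect (A : pset K1) (B : pset K2) a b : regK A -> regK B ->
    is_sup A a -> is_sup B b -> (forall p, rect A B p -> sat X p) -> sat X (a, b).

Lemma sat_sub X Y : (forall p, X p -> sat Y p) -> forall p, sat X p -> sat Y p.
Proof.
move=> XY p; elim=> {p} [p /XY // | p q le1 le2 _ | A B a b rA rB sA sB _].
- exact: sat_down.
- exact: sat_rect.
Qed.

Lemma sat_mono X Y : (forall p, X p -> Y p) -> forall p, sat X p -> sat Y p.
Proof. by move=> XY; apply: sat_sub => p /XY; apply: sat_in. Qed.

Definition cross (a : K1) (b : K2) : pset (K1 * K2) :=
  fun p => dle p.1 a \/ dle p.2 b.

Lemma sat_cross a b X :
  (forall p, X p -> cross a b p) -> forall p, sat X p -> cross a b p.
Proof.
move=> Xab p; elim=> {p} [p /Xab // | p q le1 le2 _ | A B a' b' _ _ sA sB _ IH].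
  by case=> [/(dle_trans le1) | /(dle_trans le2)]; [left | right].
case: (classic (exists2 x, A x & ~ dle x a)) => [[x Ax xNa] | Aa].
- right; case: sB => _; apply=> y By.
  by case: (IH (x, y)) => //; split.
- left; case: sA => _; apply=> x Ax.
  by apply: NNPP => xNa; apply: Aa; exists x.
Qed.

Hypotheses (R1 : R_dioid K1) (R2 : R_dioid K2).

Lemma sat_mull X c q : sat X q -> sat (Tmul (set_single c) X) (pmul c q).
Proof.
elim=> {q} [q Xq | q q' le1 le2 _ | A B a b rA rB sA sB _ IH].
- by apply: sat_in; exists c, q.
- by apply: sat_down; apply: dle_mul2l.
- apply: (sat_rect (regK_mull c.1 rA) (regK_mull c.2 rB)).
  + exact: is_sup_mull.
  + exact: is_sup_mull.
  move=> [_ _] [/= [_ [x [-> [Ax ->]]]] [_ [y [-> [By ->]]]]].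
  exact: (IH (x, y)).
Qed.

Lemma sat_mulr X c p : sat X p -> sat (Tmul X (set_single c)) (pmul p c).
Proof.
elim=> {p} [p Xp | p p' le1 le2 _ | A B a b rA rB sA sB _ IH].
- by apply: sat_in; exists p, c.
- by apply: sat_down; apply: dle_mul2r.
- apply: (sat_rect (regK_mulr c.1 rA) (regK_mulr c.2 rB)).
  + exact: is_sup_mulr.
  + exact: is_sup_mulr.
  move=> [_ _] [/= [x [_ [Ax [-> ->]]]] [y [_ [By [-> ->]]]]].
  exact: (IH (x, y)).
Qed.

Lemma sat_mul X Y p q : sat X p -> sat Y q -> sat (Tmul X Y) (pmul p q).
Proof.
move=> Xp Yq; have XYq: forall p', X p' -> sat (Tmul X Y) (pmul p' q).
  move=> p' Xp'; apply: sat_mono (sat_mull p' Yq).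
  by move=> _ [_ [q' [-> [Yq' ->]]]]; exists p', q'.
apply: sat_sub (sat_mulr q Xp).
by move=> _ [p' [_ [Xp' [-> ->]]]]; apply: XYq.
Qed.

Definition sat_equiv X Y : Prop := forall p, sat X p <-> sat Y p.

Lemma sat_equivP X Y : (forall p, X p -> sat Y p) -> (forall p, Y p -> sat X p) ->
  sat_equiv X Y.
Proof. by move=> XY YX p; split; apply: sat_sub. Qed.

Lemma sat_equiv_Rcong : Rcong sat_equiv.
Proof.
split; [|split; [|split; [|split]]].
- by move=> X _ p.
- by move=> X Y _ _ XY p; split=> /XY.
- by move=> X Y Z _ _ _ XY YZ p; split=> [/XY/YZ | /YZ/XY].
- move=> A A' B B' _ _ _ _ AA' BB'; split; apply: sat_equivP.
  1,2: move=> p [/sat_in/AA' | /sat_in/BB']; apply: sat_mono => q; by [left | right].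
  1,2: by move=> _ [p [q [/sat_in/AA' Ap [/sat_in/BB' Bq ->]]]]; apply: sat_mul.
- move=> F G _ _ FG GF; apply: sat_equivP.
  + move=> p [A [FA Ap]]; have [B [GB AB]] := FG A FA.
    move: ((AB p).1 (sat_in (or_introl Ap))); apply: sat_mono => q Bq.
    by exists B.
  + move=> p [B [GB Bp]]; have [A [FA BA]] := GF B GB.
    move: ((BA p).1 (sat_in (or_introl Bp))); apply: sat_mono => q Aq.
    by exists A.
Qed.

Lemma sat_equiv_gen : Rcong_gen sat_equiv.
Proof.
split; first exact: sat_equiv_Rcong.
move=> A B a b rA rB sA sB; apply: sat_equivP.
- move=> [x y] [/= Ax By]; apply: (@sat_down _ _ (a, b)); last exact: sat_in.
  + by case: sA => + _; apply.
  + by case: sB => + _; apply.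
- by move=> _ ->; apply: sat_rect rA rB sA sB _ => p; apply: sat_in.
Qed.

Lemma tequiv_sat X Y : tequiv X Y -> sat_equiv X Y.
Proof. by apply; apply: sat_equiv_gen. Qed.

End Saturation.

Lemma sat_Tzero_pone (K1 K2 : pzSemiRingType) :
  nontrivial K1 -> nontrivial K2 -> ~ sat (@Tzero K1 K2) (@pone K1 K2).
Proof. by move=> n1 n2 /(sat_cross (a := 0) (b := 0)) [] // /dlex0 /esym. Qed.

Lemma sat_top1 (K1 K2 : pzSemiRingType) (a a' : K1) : dioid K1 -> nontrivial K2 ->
  sat (@top1 K1 K2 a) (a', 1) -> dle a' a.
Proof.
move=> HK n2 /(sat_cross (a := a) (b := 0)) [] //.
  by move=> _ ->; left; apply: dle_refl.
by move/dlex0/esym.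
Qed.

Lemma sat_top2 (K1 K2 : pzSemiRingType) (b b' : K2) : dioid K2 -> nontrivial K1 ->
  sat (@top2 K1 K2 b) (1, b') -> dle b' b.
Proof.
move=> HK n1 /(sat_cross (a := 0) (b := b)) [] //.
  by move=> _ ->; right; apply: dle_refl.
by move/dlex0/esym.
Qed.

Theorem lemma2 (K1 K2 : pzSemiRingType) :
  R_dioid K1 -> R_dioid K2 -> nontrivial K1 -> nontrivial K2 ->
  @tensor_nontrivial K1 K2 /\
  (forall a a' : K1, @tequiv K1 K2 (@top1 K1 K2 a) (@top1 K1 K2 a') -> a = a') /\
  (forall b b' : K2, @tequiv K1 K2 (@top2 K1 K2 b) (@top2 K1 K2 b') -> b = b').
Proof.
move=> R1 R2 n1 n2; split; [|split].
- move=> /(tequiv_sat R1 R2) /(_ (@pone K1 K2)) [_ sat10].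
  by apply: (sat_Tzero_pone n1 n2); apply: sat10; apply: sat_in.
- move=> a a' /(tequiv_sat R1 R2) aa'.
  by apply: dle_antisym; apply: sat_top1 R1.1 n2 _; apply/aa'; apply: sat_in.
- move=> b b' /(tequiv_sat R1 R2) bb'.
  by apply: dle_antisym; apply: sat_top2 R2.1 n1 _; apply/bb'; apply: sat_in.
Qed.
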